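(* Let $(X_n,\|\cdot\|_n)_{n\ge1}$ be a sequence of Banach spaces, let $Z=(\sum_{n=1}^\infty\oplus X_n)_1$ with norm $\|(x_n)\|_Z=\sum_n\|x_n\|_n$, and let $(X,\|\cdot\|)$ be the completion of $c_{00}((X_n))$ under the norm defined in the context. Then $Z$ and $X$ are $2$-isomorphic; more precisely, the identity map of $c_{00}((X_n))$ extends to a linear isomorphism $T:Z\to X$ with $\frac12\|z\|_Z\le\|Tz\|\le\|z\|_Z$ for all $z\in Z$.
   Context: $c_{00}((X_n))$ is the vector space of sequences $(x_1,x_2,\dots)$ with $x_k\in X_k$ and only finitely many $x_k\ne0$; $(x_1,\dots,x_n)$ denotes $(x_1,\dots,x_n,0,0,\dots)$. The norm is defined inductively: $\|(x_1)\|=\|x_1\|_1$ (the norm of $X_1$), and for $n\ge2$, $$\|(x_1,\dots,x_n)\|=\Big(1-\tfrac{1}{n+1}\Big)\big(\|x_n\|_n+\|(x_1,\dots,x_{n-1})\|\big)+\tfrac{1}{n+1}\max\Big\{\tfrac{\|x_n\|_n}{n},\ \|(x_1,\dots,x_{n-1})\|\Big\}.$$ *)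

From HB Require Import structures.
From mathcomp Require Import all_boot all_order all_algebra.
From mathcomp Require Import all_classical all_reals all_analysis.
Set Implicit Arguments. Unset Strict Implicit. Unset Printing Implicit Defensive.
Import Order.TTheory GRing.Theory Num.Theory.
Import numFieldNormedType.Exports.
Local Open Scope classical_set_scope.
Local Open Scope ring_scope.

(* Sequences (x_1, x_2, ...) with x_k in X_k are modelled as dependent
   functions x : forall k : nat, X k, where the paper's x_k is x (k-1)
   (0-based indexing: x 0 is the paper's x_1, living in X 0 = paper's X_1). *)

Definition c00 (R : realType) (X : nat -> normedModType R) : set (forall k, X k) :=
  [set x | exists N : nat, forall k : nat, (N <= k)%N -> x k = 0].

(* cnorm_upto x n = || (x_1, ..., x_n) ||  (paper indexing), defined by the
   inductive formula of the paper: ||(x_1)|| = ||x_1||_1 and for n >= 2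
   ||(x_1..x_n)|| = (1 - 1/(n+1)) (||x_n|| + ||(x_1..x_{n-1})||)
                    + 1/(n+1) max(||x_n||/n, ||(x_1..x_{n-1})||).
   The value at n = 0 is 0 (empty sequence; not used by the paper). *)
Fixpoint cnorm_upto (R : realType) (X : nat -> normedModType R)
    (x : forall k, X k) (n : nat) : R :=
  match n with
  | 0%N => 0
  | 1%N => `|x 0%N|
  | (m.+1) as n' =>
      let p := cnorm_upto x m in
      let a := `|x m| in
      (1 - 1 / (n'.+1)%:R) * (a + p) + 1 / (n'.+1)%:R * Num.max (a / n'%:R) p
  end.

Definition in_l1 (R : realType) (X : nat -> normedModType R) (z : forall k, X k) : Prop :=
  cvgn (series (fun k => `|z k|)).

Definition normZ (R : realType) (X : nat -> normedModType R) (z : forall k, X k) : R :=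
  limn (series (fun k => `|z k|)).

From mathcomp Require Import all_boot all_order all_algebra.
From mathcomp Require Import all_classical all_reals all_analysis.
From mathcomp Require Import lra.
Set Implicit Arguments. Unset Strict Implicit. Unset Printing Implicit Defensive.
Import Order.TTheory GRing.Theory Num.Theory.
Import numFieldNormedType.Exports.
Local Open Scope classical_set_scope.
Local Open Scope ring_scope.

(* Each step of the recursion defining ||(x_1, ..., x_n)|| is a convex
   combination, with weight 1/(n+1) <= 1/2 on the second term, of
   ||x_n|| + p and max(||x_n||/n, p), where p = ||(x_1, ..., x_{n-1})||; both
   lie in [p, ||x_n|| + p], so the new norm is at least p + ||x_n||/2 and at
   most p + ||x_n||.  By induction the norm of a finitely supported sequence
   lies between half its l1 norm and its l1 norm.  Hence j is linear and
   2-bi-Lipschitz on c00 for the l1 norm: it extends to l1 as the limit of the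
   images of truncations, the extension is injective, and its range, being the
   image of a complete space under a map bounded below, is closed and contains
   the dense set j(c00). *)

Lemma convex_step_bounds {R : realFieldType} {a p M c : R} :
  0 <= a -> 0 <= c -> c <= 1 / 2 -> p <= M -> M <= a + p ->
  p + a / 2 <= (1 - c) * (a + p) + c * M <= a + p.
Proof.
move=> a0 c0 c_le pM Map.
have cpM : c * p <= c * M by apply: ler_wpM2l.
have cMap : c * M <= c * (a + p) by apply: ler_wpM2l.
have ca : c * a <= 1 / 2 * a by apply: ler_wpM2r.
apply/andP; split; lra.
Qed.

Section CnormBounds.
Variables (R : realType) (X : nat -> normedModType R).
Implicit Types x : forall k, X k.

Lemma cnorm_uptoS x m : (0 < m)%N -> cnorm_upto x m.+1 =
  (1 - 1 / m.+2%:R) * (`|x m| + cnorm_upto x m)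
  + 1 / m.+2%:R * Num.max (`|x m| / m.+1%:R) (cnorm_upto x m).
Proof. by case: m. Qed.

Lemma cnorm_upto_bounds x n :
  (\sum_(0 <= k < n) `|x k|) / 2 <= cnorm_upto x n <= \sum_(0 <= k < n) `|x k|.
Proof.
elim: n => [|[|m] IH]; first by rewrite big_geq // mul0r /= lexx.
  by rewrite big_nat1 /=; have := normr_ge0 (x 0%N); lra.
rewrite cnorm_uptoS // big_nat_recr //= -/(cnorm_upto x m.+1).
have a0 := normr_ge0 (x m.+1).
have s0 : 0 <= \sum_(0 <= k < m.+1) `|x k| by rewrite sumr_ge0.
move: IH a0 s0; set s := \sum_(0 <= k < _) _; set p := cnorm_upto x _.
set a := `|x _|; clearbody s p a => /andP[s_p p_s] a0 s0.
have c_le : 1 / m.+3%:R <= 1 / 2 :> R by rewrite ler_pM2l // lef_pV2 ?ler_nat ?posrE.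
have a_ap : a <= a + p by lra.
have am_le : a / m.+2%:R <= a + p.
  by apply: le_trans a_ap; rewrite ler_pdivrMr // ler_peMr // ler1n.
have pM : p <= Num.max (a / m.+2%:R) p by rewrite le_max lexx orbT.
have Map : Num.max (a / m.+2%:R) p <= a + p by rewrite ge_max am_le /=; lra.
have /andP[] := convex_step_bounds a0 (divr_ge0 ler01 (ler0n _ _)) c_le pM Map.
set q := (1 - _) * _ + _ => lo hi; apply/andP; split; lra.
Qed.

End CnormBounds.

Section AbsolutelySummable.
Variables (R : realType) (X : nat -> normedModType R).
Local Notation V := (forall k, X k).
Implicit Types (x z : V) (u : nat -> V).

Definition psum z : R^nat := series (fun k => `|z k|).

Lemma psumE z n : psum z n = \sum_(0 <= k < n) `|z k|.
Proof. by []. Qed.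

Lemma psum0 z : psum z 0 = 0.
Proof. by rewrite psumE big_geq. Qed.

Lemma psumS z n : psum z n.+1 = psum z n + `|z n|.
Proof. by rewrite !psumE big_nat_recr. Qed.

Lemma psum_cat z {m n} : (m <= n)%N ->
  psum z n = psum z m + \sum_(m <= k < n) `|z k|.
Proof. by move=> mn; rewrite !psumE (@big_cat_nat _ _ _ m). Qed.

Lemma le_psum z : {homo psum z : m n / (m <= n)%N >-> m <= n}.
Proof. by move=> m n mn; rewrite (psum_cat z mn) lerDl sumr_ge0. Qed.

Lemma norm_le_psum z k : `|z k| <= psum z k.+1.
Proof. by rewrite psumS lerDr psumE sumr_ge0. Qed.

Lemma psum_le_normZ {z} n : in_l1 z -> psum z n <= normZ z.
Proof. by move=> z1; apply: nondecreasing_cvgn_le => //; apply: le_psum. Qed.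

Lemma normZ_le z e : in_l1 z -> (forall n, psum z n <= e) -> normZ z <= e.
Proof. by move=> z1 ze; apply: limr_le => //; apply: nearW. Qed.

Lemma normZ_le0 z : in_l1 z -> normZ z <= 0 -> forall k, z k = 0.
Proof.
move=> z1 z0 k; apply/eqP; rewrite -normr_le0.
exact: le_trans (norm_le_psum z k) (le_trans (psum_le_normZ _ z1) z0).
Qed.

Lemma in_l1_c00 x : c00 x -> in_l1 x.
Proof.
case=> N xN; apply: nondecreasing_is_cvgn; first exact: le_psum.
exists (psum x N) => _ [n _ <-]; change (psum x n <= psum x N).
have [nN|Nn] := leqP n N; first exact: le_psum.
rewrite (psum_cat x (ltnW Nn)) big_nat_cond big1 ?addr0 // => k /andP[/andP[Nk _] _].
by rewrite xN ?normr0.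
Qed.

Lemma in_l1_sub z1 z2 : in_l1 z1 -> in_l1 z2 -> in_l1 (fun k => z1 k - z2 k).
Proof.
move=> h1 h2; apply: (series_le_cvg (v_ := fun k => `|z1 k| + `|z2 k|)) => //.
- by move=> k; rewrite /= -[`|z2 k|]normrN ler_normD.
exact: is_cvg_seriesD.
Qed.

Lemma psum_cvg_pointwise u w : (forall k, (fun M => u M k) @ \oo --> w k) ->
  forall n, (fun M => psum (u M) n) @ \oo --> psum w n.
Proof.
move=> uw; elim=> [|n IH].
  by rewrite psum0 (funext (fun M => psum0 (u M))); exact: cvg_cst.
rewrite psumS (funext (fun M => psumS (u M) n)).
exact: cvgD IH (cvg_norm (uw n)).
Qed.

End AbsolutelySummable.

Section AbsolutelySummableComplete.
Variables (R : realType) (X : nat -> completeNormedModType R).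
Local Notation V := (forall k, X k).
Implicit Types (z w : V) (u : nat -> V).

Lemma l1_cauchy_cvg u : (forall M, in_l1 (u M)) ->
  (forall e, 0 < e -> exists M0, forall M M', (M0 <= M)%N -> (M0 <= M')%N ->
     forall n, psum (fun k => u M k - u M' k) n <= e) ->
  exists2 w, in_l1 w & forall e, 0 < e -> exists M0, forall M, (M0 <= M)%N ->
     forall n, psum (fun k => u M k - w k) n <= e.
Proof.
move=> u1 u_cauchy.
have u_cvg k : cvgn (fun M => u M k).
  apply: cauchy_cvg; apply: cauchy_exP => e e0.
  have e2 : 0 < e / 2 by lra.
  have [M0 HM0] := u_cauchy _ e2.
  exists (u M0 k); exists M0 => // M /= M0M; rewrite -ball_normE /ball_ /=.
  apply: le_lt_trans (norm_le_psum (fun k => u M0 k - u M k) k) _.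
  by apply: le_lt_trans (HM0 M0 M (leqnn _) M0M k.+1) _; lra.
pose w : V := fun k => lim (u M k @[M --> \oo]).
have uw e : 0 < e -> exists M0, forall M, (M0 <= M)%N ->
    forall n, psum (fun k => u M k - w k) n <= e.
  move=> e0; have [M0 HM0] := u_cauchy e e0; exists M0 => M M0M n.
  have lim_psum : (fun M' => psum (fun k => u M k - u M' k) n) @ \oo -->
      psum (fun k => u M k - w k) n.
    apply: (psum_cvg_pointwise (u := fun M' k => u M k - u M' k)) => k.
    exact: cvgB (cvg_cst _) (u_cvg k).
  rewrite -(cvg_lim _ lim_psum) //; apply: limr_le; first exact: cvgP lim_psum.
  by exists M0 => // M' /= M0M'; apply: HM0.
exists w => //; have [M0 HM0] := uw 1 ltr01.
apply: nondecreasing_is_cvgn; first exact: le_psum.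
exists (1 + normZ (u M0)) => _ [n _ <-].
apply: le_trans (lerD (HM0 M0 (leqnn _) n) (psum_le_normZ n (u1 M0))).
rewrite !psumE -big_split /=; apply: ler_sum => k _.
by rewrite -{1}(subKr (u M0 k) (w k)) addrC ler_normB.
Qed.

End AbsolutelySummableComplete.

Lemma closure_cvg_seq (R : realType) (V : normedModType R) (A : set V) (y : V) :
  closure A y -> exists2 u : nat -> V, (forall n, A (u n)) & u @ \oo --> y.
Proof.
move=> Ay.
have near_y n : exists x, A x /\ `|y - x| < n.+1%:R^-1.
  have n0 : 0 < n.+1%:R^-1 :> R by rewrite invr_gt0.
  have [x [Ax yx]] := Ay _ (nbhsx_ballx y _ n0).
  by exists x; move: yx; rewrite -ball_normE.
have [u uP] := choice near_y; exists u => [n|]; first exact: (uP n).1.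
apply/cvgrPdist_lt => e e0; near=> n.
apply: lt_trans (uP n).2 _; near: n; exact: near_infty_natSinv_lt (PosNum e0).
Unshelve. all: by end_near.
Qed.

Section Completion.
Variables (R : realType) (X : nat -> completeNormedModType R)
  (Xc : completeNormedModType R) (j : (forall k, X k) -> Xc).
Hypothesis j_add : forall x y, c00 x -> c00 y -> j (fun k => x k + y k) = j x + j y.
Hypothesis j_scale : forall (a : R) x, c00 x -> j (fun k => a *: x k) = a *: j x.
Hypothesis j_isom : forall x (N : nat), (forall k : nat, (N <= k)%N -> x k = 0) ->
  `|j x| = cnorm_upto x N.
Local Notation V := (forall k, X k).
Implicit Types (x y z : V).

Definition trunc z n : V := fun k => if (k < n)%N then z k else 0.

Lemma trunc_ge z n k : (n <= k)%N -> trunc z n k = 0.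
Proof. by rewrite /trunc leqNgt => /negbTE ->. Qed.

Lemma c00_trunc z n : c00 (trunc z n).
Proof. by exists n => k; apply: trunc_ge. Qed.

Lemma c00_scale (a : R) x : c00 x -> c00 (fun k => a *: x k).
Proof. by case=> N xN; exists N => k /xN ->; rewrite scaler0. Qed.

Lemma c00_sub x y : c00 x -> c00 y -> c00 (fun k => x k - y k).
Proof.
case=> N xN [M yM]; exists (maxn N M) => k.
by rewrite geq_max => /andP[/xN -> /yM ->]; rewrite subr0.
Qed.

Lemma j_sub x y : c00 x -> c00 y -> j (fun k => x k - y k) = j x - j y.
Proof.
move=> cx cy; have cNy := c00_scale (-1) cy.
have -> : (fun k => x k - y k) = (fun k => x k + (-1) *: y k).
  by apply: functional_extensionality_dep => k; rewrite scaleN1r.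
by rewrite j_add // j_scale // scaleN1r.
Qed.

Lemma norm_j_bounds x N : (forall k, (N <= k)%N -> x k = 0) ->
  psum x N / 2 <= `|j x| <= psum x N.
Proof. by move=> xN; rewrite (j_isom xN); apply: cnorm_upto_bounds. Qed.

Lemma psum_le_norm_j x n : c00 x -> psum x n <= 2 * `|j x|.
Proof.
case=> N xN; have xNn k : (maxn n N <= k)%N -> x k = 0.
  by rewrite geq_max => /andP[_ /xN].
have /andP[lo _] := norm_j_bounds xNn.
by apply: le_trans (le_psum x (leq_maxl n N)) _; rewrite -ler_pdivrMl // mulrC.
Qed.

Definition jext z : Xc := limn (fun n => j (trunc z n)).

Lemma norm_j_trunc_sub z m n : (m <= n)%N ->
  `|j (trunc z n) - j (trunc z m)| <= \sum_(m <= k < n) `|z k|.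
Proof.
move=> mn; rewrite -(j_sub (c00_trunc z n) (c00_trunc z m)).
set d := fun k => _; have dn k : (n <= k)%N -> d k = 0.
  by move=> nk; rewrite /d !trunc_ge ?subr0 // (leq_trans mn nk).
have /andP[_ hi] := norm_j_bounds dn; apply: le_trans hi _.
rewrite (psum_cat d mn) psumE big_nat_cond big1 ?add0r.
  by apply: ler_sum_nat => k /andP[mk kn]; rewrite /d /trunc kn ltnNge mk subr0.
by move=> k /andP[/andP[_ km] _]; rewrite /d /trunc km (leq_trans km mn) subrr normr0.
Qed.

Lemma jext_cvg z : in_l1 z -> j (trunc z n) @[n --> \oo] --> jext z.
Proof.
move=> z1; apply: cauchy_cvg; apply: cauchy_exP => e e0.
have [N _ HN] := (cvgrPdist_lt _ _).1 z1 e e0.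
exists (j (trunc z N)); exists N => // n /= Nn; rewrite -ball_normE /ball_ /= distrC.
apply: le_lt_trans (norm_j_trunc_sub z Nn) (le_lt_trans _ (HN N (leqnn N))).
have := psum_le_normZ n z1; rewrite (psum_cat z Nn) -/(psum z N) -/(normZ z).
by rewrite ger0_norm ?subr_ge0 ?(psum_le_normZ N z1) //; lra.
Qed.

Lemma jext_c00 x : c00 x -> jext x = j x.
Proof.
case=> N xN; apply/cvg_lim => //; apply: cvg_near_cst; exists N => // n /= Nn.
congr j; apply: functional_extensionality_dep => k; rewrite /trunc.
by case: ltnP => // nk; rewrite xN // (leq_trans Nn nk).
Qed.

Lemma jext_lin (a : R) z1 z2 : in_l1 z1 -> in_l1 z2 ->
  jext (fun k => a *: z1 k + z2 k) = a *: jext z1 + jext z2.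
Proof.
move=> h1 h2; apply/cvg_lim => //.
have -> : (fun n => j (trunc (fun k => a *: z1 k + z2 k) n)) =
          (fun n => a *: j (trunc z1 n) + j (trunc z2 n)).
  apply: funext => n; rewrite -(j_scale a (c00_trunc z1 n)).
  rewrite -(j_add (c00_scale a (c00_trunc z1 n)) (c00_trunc z2 n)).
  congr j; apply: functional_extensionality_dep => k.
  by rewrite /trunc; case: ifP; rewrite ?scaler0 ?addr0.
apply: cvgD; last exact: jext_cvg.
by apply: cvgZr; exact: jext_cvg.
Qed.

Lemma jext_sub z1 z2 : in_l1 z1 -> in_l1 z2 ->
  jext (fun k => z1 k - z2 k) = jext z1 - jext z2.
Proof.
move=> h1 h2; rewrite addrC -scaleN1r -jext_lin //; congr jext.
by apply: functional_extensionality_dep => k; rewrite scaleN1r addrC.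
Qed.

Lemma jext_norm_bounds z : in_l1 z -> normZ z / 2 <= `|jext z| <= normZ z.
Proof.
move=> z1.
have jz : `|j (trunc z n)| @[n --> \oo] --> `|jext z|.
  by apply: cvg_norm; exact: jext_cvg.
have trunc_bounds n : psum z n / 2 <= `|j (trunc z n)| <= psum z n.
  have -> : psum z n = psum (trunc z n) n.
    by rewrite !psumE; apply: eq_big_nat => k /andP[_ kn]; rewrite /trunc kn.
  exact/norm_j_bounds/trunc_ge.
have jz2 : 2 * `|j (trunc z n)| @[n --> \oo] --> 2 * `|jext z|.
  by apply: cvgMr; exact: jz.
have lo : normZ z <= 2 * `|jext z|.
  apply: ler_cvg_to z1 jz2 _; apply: nearW => n.
  by have /andP[+ _] := trunc_bounds n; rewrite ler_pdivrMr // mulrC.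
have hi : `|jext z| <= normZ z.
  by apply: ler_cvg_to jz z1 _; apply: nearW => n; have /andP[] := trunc_bounds n.
by apply/andP; split; lra.
Qed.

Lemma jext_inj z1 z2 : in_l1 z1 -> in_l1 z2 -> jext z1 = jext z2 -> z1 = z2.
Proof.
move=> h1 h2 e; have h12 := in_l1_sub h1 h2.
have /andP[lo _] := jext_norm_bounds h12.
have z0 : normZ (fun k => z1 k - z2 k) <= 0.
  by move: lo; rewrite jext_sub // e subrr normr0; lra.
apply: functional_extensionality_dep => k; apply/eqP; rewrite -subr_eq0.
exact/eqP/(normZ_le0 h12 z0).
Qed.

Lemma jext_surj : closure (j @` (@c00 R X)) = setT ->
  forall y : Xc, exists2 z, in_l1 z & jext z = y.
Proof.
move=> j_dense y.
have : closure (j @` (@c00 R X)) y by rewrite j_dense.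
move=> /closure_cvg_seq[v v_c00 v_y].
have /choice[xs xsP] : forall M, exists x : V, c00 x /\ j x = v M.
  by move=> M; have [x ? ?] := v_c00 M; exists x.
have xs_c00 M : c00 (xs M) := (xsP M).1.
have xs_l1 M : in_l1 (xs M) := in_l1_c00 (xs_c00 M).
have jxs_y : j (xs M) @[M --> \oo] --> y.
  by rewrite (_ : (fun M => j (xs M)) = v) //; apply: funext => M; exact: (xsP M).2.
have xs_cauchy e : 0 < e -> exists M0, forall M M', (M0 <= M)%N -> (M0 <= M')%N ->
    forall n, psum (fun k => xs M k - xs M' k) n <= e.
  move=> e0; have e4 : 0 < e / 4 by lra.
  have [M0 _ HM0] := (cvgrPdist_le _ _).1 jxs_y _ e4.
  exists M0 => M M' M0M M0M' n.
  apply: le_trans (psum_le_norm_j n (c00_sub (xs_c00 M) (xs_c00 M'))) _.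
  rewrite j_sub //; have := ler_distD y (j (xs M)) (j (xs M')).
  have := HM0 M M0M; have := HM0 M' M0M'; rewrite [`|j (xs M) - y|]distrC; lra.
have [w w1 xs_w] := l1_cauchy_cvg xs_l1 xs_cauchy.
exists w => //; apply/eqP; rewrite -subr_eq0 -normr_le0.
apply/ler_addgt0Pr => e e0; rewrite add0r; have e2 : 0 < e / 2 by lra.
have [M1 _ HM1] := (cvgrPdist_le _ _).1 jxs_y _ e2.
have [M2 HM2] := xs_w _ e2.
pose M := maxn M1 M2.
have d1 := HM1 M (leq_maxl _ _).
have d2 : `|j (xs M) - jext w| <= e / 2.
  rewrite -(jext_c00 (xs_c00 M)) -jext_sub //.
  have /andP[_ hi] := jext_norm_bounds (in_l1_sub (xs_l1 M) w1).
  exact: le_trans hi (normZ_le (in_l1_sub (xs_l1 M) w1) (HM2 M (leq_maxr _ _))).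
apply: le_trans (ler_distD (j (xs M)) _ _) _.
by rewrite [`|jext w - _|]distrC [`|_ - y|]distrC; lra.
Qed.

End Completion.

Theorem proposition1p3 (R : realType) (X : nat -> completeNormedModType R)
    (Xc : completeNormedModType R) (j : (forall k, X k) -> Xc)
    (* (Xc, j) is a completion of c00((X_n)) with the norm of the context:
       j is linear on c00, isometric for that norm, with dense range. *)
    (j_add : forall x y, c00 x -> c00 y -> j (fun k => x k + y k) = j x + j y)
    (j_scale : forall (a : R) x, c00 x -> j (fun k => a *: x k) = a *: j x)
    (j_isom : forall x (N : nat), (forall k : nat, (N <= k)%N -> x k = 0) ->
                `|j x| = cnorm_upto x N)
    (j_dense : closure (j @` (@c00 R X)) = setT) :
  exists T : (forall k, X k) -> Xc,
    [/\ forall x, c00 x -> T x = j x,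
        forall (a : R) z1 z2, in_l1 z1 -> in_l1 z2 ->
          T (fun k => a *: z1 k + z2 k) = a *: T z1 + T z2,
        forall z, in_l1 z -> normZ z / 2 <= `|T z| /\ `|T z| <= normZ z,
        forall z1 z2, in_l1 z1 -> in_l1 z2 -> T z1 = T z2 -> z1 = z2
      & forall y : Xc, exists2 z, in_l1 z & T z = y].
Proof.
exists (jext j); split.
- exact: jext_c00.
- by move=> a z1 z2; apply: jext_lin.
- by move=> z z1; apply/andP; apply: jext_norm_bounds.
- by move=> z1 z2; apply: jext_inj.
- by apply: jext_surj.
Qed.
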